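(* For every $n\ge1$, $$M_n=U_n\cup\bigcup_{j\ge n}\big((\bar\beta_j-n)+M_0\big).$$
   Context: $K$ is an algebraically closed field, $A=K[x,y]_{(x,y)}$. Set $\bar\beta_0=1$, $\bar\beta_{i+1}=2\bar\beta_i+2^{-(i+1)}$, i.e. $\bar\beta_i=\frac13(2^{i+2}-2^{-i})$. Let $P_0=x$, $P_1=y$, $P_{i+1}=P_i^2-P_0^{2^{i+1}}P_{i-1}$ ($i\ge1$). Let $\bar\nu$ be the valuation of $K(x,y)$ dominating $A$ for which $P_0,P_1,P_2,\dots$ is a (minimal) generating sequence with $\bar\nu(P_i)=\bar\beta_i$; its value group is $\bigcup_{i\ge0}2^{-i}\mathbb Z$ and its semigroup on $A$ is $M_0=\bar\nu(A\setminus\{0\})=\sum_{i\ge0}\mathbb N\bar\beta_i$. Let $z=y/x$, $W_n=\{a_0+a_1z+\cdots+a_nz^n\mid a_j\in K[x,y]\}$, $M_n=\{\bar\nu(f)\mid 0\ne f\in W_n\}$ (an $M_0$-module), and $U_n=\{\lambda\in M_n\mid \lambda=\sum_{j=0}^{n-1}l_j\bar\beta_j$ for some $l_j\in\mathbb Z\}$. *)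

From HB Require Import structures.
From mathcomp Require Import all_boot all_order all_algebra.
Set Implicit Arguments. Unset Strict Implicit. Unset Printing Implicit Defensive.
Import Order.TTheory GRing.Theory Num.Theory.
Local Open Scope ring_scope.

Section Setup.
Variable K : closedFieldType.

(* K[x,y] realised as {poly {poly K}}: x is the inner variable, y the outer one *)
Definition Kxy := {poly {poly K}}.
Definition Kxy_x : Kxy := ('X)%:P.
Definition Kxy_y : Kxy := 'X.

Definition Kxy_frac := {fraction Kxy}.
Definition emb (f : Kxy) : Kxy_frac := FracField.tofrac f.

Fixpoint Pseq (i : nat) : Kxy * Kxy :=
  match i with
  | 0 => (Kxy_x, Kxy_y)
  | i'.+1 => let (a, b) := Pseq i' in (b, b ^+ 2 - Kxy_x ^+ (2 ^ i'.+2) * a)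
  end.
(* P 0 = x, P 1 = y, P (i+1) = P i ^2 - x^(2^(i+1)) P (i-1) for i >= 1 *)
Definition P (i : nat) : Kxy := (Pseq i).1.

Fixpoint betabar (i : nat) : rat :=
  match i with
  | 0 => 1
  | i'.+1 => 2 * betabar i' + (2 ^+ i'.+1)^-1
  end.

Definition Pmono (e : seq nat) : Kxy := \prod_(i < size e) P i ^+ (nth 0 e i).
Definition mono_val (e : seq nat) : rat := \sum_(i < size e) (nth 0 e i)%:R * betabar i.

(* nu is a valuation of K(x,y) (values of nonzero elements, in Q), trivial on K,
   dominating A = K[x,y]_(x,y), with nu(P_i) = betabar_i and (P_i) a generating
   sequence of nu: for every lambda, the ideal {f in A | nu f >= lambda} is
   generated by the monomials prod P_i^e_i of value >= lambda. *)
Definition is_nubar (nu : Kxy_frac -> rat) : Prop :=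
  (forall a b, a != 0 -> b != 0 -> nu (a * b) = nu a + nu b) /\
      (forall a b, a + b != 0 -> a != 0 -> b != 0 ->
                   Num.min (nu a) (nu b) <= nu (a + b)) /\
      (forall c : K, c != 0 -> nu (emb (c%:P%:P)) = 0) /\
      (* dominates A: nonnegative on A, positive on the maximal ideal *)
      (forall f : Kxy, f != 0 -> 0 <= nu (emb f)) /\
      (forall f : Kxy, f != 0 -> f.[0].[0] = 0 -> 0 < nu (emb f)) /\
      (forall i, nu (emb (P i)) = betabar i) /\
      (forall (lam : rat) (f : Kxy), f != 0 -> lam <= nu (emb f) ->
         exists (s : Kxy) (t : seq (Kxy * seq nat)),
           [/\ s.[0].[0] != 0,
               all (fun p => lam <= mono_val p.2) t &
               s * f = \sum_(p <- t) p.1 * Pmono p.2]).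

Definition zz : Kxy_frac := emb Kxy_y / emb Kxy_x.
Definition W (n : nat) (f : Kxy_frac) : Prop :=
  exists a : nat -> Kxy, f = \sum_(j < n.+1) emb (a j) * zz ^+ j.

Definition M (nu : Kxy_frac -> rat) (n : nat) (lam : rat) : Prop :=
  exists f, [/\ W n f, f != 0 & nu f = lam].

Definition U (nu : Kxy_frac -> rat) (n : nat) (lam : rat) : Prop :=
  M nu n lam /\ exists l : nat -> int, lam = \sum_(j < n) (l j)%:~R * betabar j.

End Setup.

From HB Require Import structures.
From mathcomp Require Import all_boot all_order all_algebra ring.
Set Implicit Arguments. Unset Strict Implicit. Unset Printing Implicit Defensive.
Import Order.TTheory GRing.Theory Num.Theory.
Local Open Scope ring_scope.

(* Write m = (x, y) for the maximal ideal of K[x,y] and z = y / x.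
   (1) Denominators: x^n W_n ⊆ K[x,y], and conversely m^n ⊆ x^n W_n; since
       P_j ∈ m^j, the element  P_j h / x^n  lies in W_n whenever j >= n.
   (2) Values: since (P_i) is a generating sequence, the value of a nonzero
       polynomial is the value  Σ e_i betabar_i  of some monomial  Π P_i^{e_i}.
   "⊆": for f ∈ W_n, g = x^n f is a polynomial, so nu(f) = Σ e_i betabar_i - n.
   If some e_j > 0 with j >= n, removing one factor P_j exhibits nu(f) in
   (betabar_j - n) + M_0; otherwise nu(f) is an integral combination of
   betabar_0 = 1, ..., betabar_(n-1), i.e. nu(f) ∈ U_n.
   "⊇": U_n ⊆ M_n by definition, and  nu(P_j h / x^n) = betabar_j - n + nu(h). *)

Section Polynomials.
Variable K : closedFieldType.

Local Notation x := (Kxy_x K).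
Local Notation y := (Kxy_y K).

(* Membership in the n-th power of the maximal ideal m = (x, y) of K[x,y]. *)
Fixpoint mpow (n : nat) (g : Kxy K) : Prop :=
  match n with
  | 0 => True
  | n'.+1 => exists u v, [/\ mpow n' u, mpow n' v & g = x * u + y * v]
  end.

Lemma mpow0 n : mpow n 0.
Proof.
elim: n => [//|n IH] /=; exists 0, 0; split => //.
by rewrite !mulr0 addr0.
Qed.

Lemma mpowM n (c g : Kxy K) : mpow n g -> mpow n (c * g).
Proof.
elim: n g => [//|n IH] g /= [u [v [hu hv ->]]].
exists (c * u), (c * v); split; [exact: IH | exact: IH |].
by rewrite mulrDr mulrCA [c * (y * v)]mulrCA.
Qed.

Lemma mpowD n (g h : Kxy K) : mpow n g -> mpow n h -> mpow n (g + h).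
Proof.
elim: n g h => [//|n IH] g h /= [u [v [hu hv ->]]] [u' [v' [hu' hv' ->]]].
exists (u + u'), (v + v'); split; [exact: IH | exact: IH |].
by rewrite !mulrDr addrACA.
Qed.

Lemma mpowB n (g h : Kxy K) : mpow n g -> mpow n h -> mpow n (g - h).
Proof. by move=> hg hh; apply: mpowD => //; rewrite -mulN1r; apply: mpowM. Qed.

Lemma mpowSn n (g : Kxy K) : mpow n.+1 g -> mpow n g.
Proof.
elim: n g => [//|n IH] g [u [v [hu hv ->]]].
by exists u, v; split; [exact: IH | exact: IH |].
Qed.

Lemma mpow_le m n (g : Kxy K) : (m <= n)%N -> mpow n g -> mpow m g.
Proof.
move=> /subnK <-; elim: (n - m)%N => [//|k IH] h.
by apply: IH; apply: mpowSn.
Qed.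

Lemma mpow_mul a b (g h : Kxy K) : mpow a g -> mpow b h -> mpow (a + b) (g * h).
Proof.
elim: a g => [|a IH] g; first by move=> _ hh; rewrite add0n; apply: mpowM.
move=> [u [v [hu hv ->]]] hh.
exists (u * h), (v * h); split; [exact: IH | exact: IH |].
by rewrite mulrDl !mulrA.
Qed.

Lemma mpow_xpow m : mpow m (x ^+ m).
Proof.
elim: m => [//|m IH] /=; exists (x ^+ m), 0; split; [by [] | exact: mpow0 |].
by rewrite mulr0 addr0 exprS.
Qed.

Lemma mpow_y : mpow 1 y.
Proof. by exists 0, 1; split => //; rewrite mulr0 add0r mulr1. Qed.

Lemma P_rec i : P K i.+2 = P K i.+1 ^+ 2 - x ^+ (2 ^ i.+2) * P K i.
Proof. by rewrite /P /=; case: (Pseq K i). Qed.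

(* P_i lies in m^i: for i >= 1 both terms of the recursion do. *)
Lemma mpow_P i : mpow i (P K i).
Proof.
case: i => [//|i]; elim: i => [|i IH]; first exact: mpow_y.
rewrite P_rec; apply: mpowB.
  apply: (@mpow_le _ (i.+1 + i.+1)); first by rewrite addnS ltnS leq_addr.
  by rewrite expr2; apply: mpow_mul.
rewrite mulrC; apply: mpowM; apply: (@mpow_le _ (2 ^ i.+2)); last exact: mpow_xpow.
by apply: ltnW; apply: ltn_expl.
Qed.

Lemma P_at_x0 i : map_poly (horner_eval 0) (P K i.+1) = 'X ^+ (2 ^ i).
Proof.
elim: i => [|i IH]; first by rewrite /P /= map_polyX.
have x0 : map_poly (horner_eval (0 : K)) x = 0.
  by rewrite map_polyC /= horner_evalE hornerX.
rewrite P_rec rmorphB !rmorphM !rmorphXn /= IH x0 expr0n expn_eq0 /= mul0r subr0.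
by rewrite -exprD addnn -mul2n expnS.
Qed.

Lemma P_neq0 i : P K i != 0.
Proof.
case: i => [|i]; first by rewrite polyC_eq0 polyX_eq0.
apply/eqP => P0; have := P_at_x0 i; rewrite P0 rmorph0 => /eqP.
by rewrite eq_sym expf_eq0 polyX_eq0 andbF.
Qed.

Local Notation x' := (emb x).

Lemma emb0 : emb (0 : Kxy K) = 0. Proof. exact: rmorph0. Qed.
Lemma embD (f g : Kxy K) : emb (f + g) = emb f + emb g. Proof. exact: rmorphD. Qed.
Lemma embM (f g : Kxy K) : emb (f * g) = emb f * emb g. Proof. exact: rmorphM. Qed.
Lemma embX (f : Kxy K) k : emb (f ^+ k) = emb f ^+ k. Proof. exact: rmorphXn. Qed.
Lemma emb_sum (I : Type) (r : seq I) (F : I -> Kxy K) :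
  emb (\sum_(i <- r) F i) = \sum_(i <- r) emb (F i).
Proof. exact: rmorph_sum. Qed.

Lemma emb_eq0 (f : Kxy K) : (emb f == 0) = (f == 0).
Proof. exact: tofrac_eq0. Qed.

Lemma embx_neq0 : x' != 0.
Proof. by rewrite emb_eq0; exact: (P_neq0 0). Qed.

Lemma zzMx : zz K * x' = emb y.
Proof. by rewrite /zz divfK // embx_neq0. Qed.

Lemma W_add n (f g : Kxy_frac K) : W n f -> W n g -> W n (f + g).
Proof.
move=> [a ->] [b ->]; exists (fun k => a k + b k).
by rewrite -big_split; apply: eq_bigr => k _ /=; rewrite embD mulrDl.
Qed.

Lemma W_widen n (f : Kxy_frac K) : W n f -> W n.+1 f.
Proof.
move=> [a ->]; exists (fun k => if k == n.+1 then 0 else a k).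
rewrite [RHS]big_ord_recr /= eqxx emb0 mul0r addr0.
by apply: eq_bigr => k _; rewrite ifN // neq_ltn ltn_ord.
Qed.

Lemma W_zz n (f : Kxy_frac K) : W n f -> W n.+1 (zz K * f).
Proof.
move=> [a ->]; exists (fun k => if k is k'.+1 then a k' else 0).
rewrite [RHS]big_ord_recl /= emb0 mul0r add0r mulr_sumr.
by apply: eq_bigr => k _ /=; rewrite exprS mulrCA.
Qed.

Lemma W0E (f : Kxy_frac K) : W 0 f <-> exists h : Kxy K, f = emb h.
Proof.
split=> [[a ->]|[h ->]]; last by exists (fun _ => h); rewrite big_ord1 mulr1.
by exists (a 0%N); rewrite big_ord1 mulr1.
Qed.

(* m^n ⊆ x^n W_n, since (x u + y v) / x^(n+1) = u / x^n + z (v / x^n). *)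
Lemma mpow_W n (g : Kxy K) : mpow n g -> W n (emb g / x' ^+ n).
Proof.
elim: n g => [|n IH] g; first by rewrite expr0 invr1 mulr1 => _; apply/W0E; exists g.
have split_frac (R : fieldType) (a b c d : R) : a != 0 ->
    (a * b + c * a * d) / a ^+ n.+1 = b / a ^+ n + c * (d / a ^+ n).
  by move=> a0; rewrite exprS; field; rewrite expf_neq0.
move=> [u [v [hu hv ->]]].
rewrite embD !embM -zzMx split_frac ?embx_neq0 //.
by apply: W_add; [apply: W_widen; apply: IH | apply: W_zz; apply: IH].
Qed.

Lemma W_clear n (f : Kxy_frac K) : W n f -> exists g : Kxy K, x' ^+ n * f = emb g.
Proof.
move=> [a ->]; exists (\sum_(k < n.+1) a k * x ^+ (n - k) * y ^+ k).
rewrite mulr_sumr emb_sum; apply: eq_bigr => k _.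
have hk : (k <= n)%N by rewrite -ltnS.
rewrite !embM !embX -zzMx [(zz K * x') ^+ k]exprMn -{1}(subnK hk) exprD.
by rewrite mulrACA [x' ^+ (n - k) * _]mulrC [x' ^+ k * _]mulrC.
Qed.

End Polynomials.

Lemma mono_val_drop j e : (j < size e)%N -> (0 < nth 0 e j)%N ->
  mono_val e = betabar j + mono_val (set_nth 0 e j (nth 0 e j).-1).
Proof.
move=> hj hpos; rewrite /mono_val size_set_nth (maxn_idPr hj).
have -> : \sum_(i < size e) (nth 0 e i)%:R * betabar i =
    \sum_(i < size e) ((i == j :> nat)%:R * betabar i +
       (nth 0 (set_nth 0 e j (nth 0 e j).-1) i)%:R * betabar i).
  apply: eq_bigr => i _; rewrite nth_set_nth /=.
  case: eqP => [->|_]; last by rewrite mul0r add0r.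
  by rewrite -{1}(prednK hpos) -addn1 natrD mulrDl mul1r addrC.
rewrite big_split /= (bigD1 (Ordinal hj)) //= eqxx mul1r big1 ?addr0 //.
by move=> i /negPf; rewrite -val_eqE /= => ->; rewrite mul0r.
Qed.

Lemma sum_trunc (G : nat -> rat) m1 m2 : (m1 <= m2)%N ->
  (forall i, (m1 <= i < m2)%N -> G i = 0) -> \sum_(i < m2) G i = \sum_(i < m1) G i.
Proof.
move=> hm hG; rewrite -!(big_mkord xpredT G) (big_cat_nat (leq0n m1) hm) /=.
by rewrite [X in _ + X]big_nat_cond [X in _ + X]big1 ?addr0 // => i /andP[/hG].
Qed.

Lemma mono_val_low n e : (forall j, (n <= j)%N -> nth 0 e j = 0%N) ->
  mono_val e = \sum_(i < n) (nth 0 e i)%:R * betabar i.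
Proof.
move=> he; pose G i := (nth 0 e i)%:R * betabar i.
rewrite /mono_val -/(\sum_(i < _) G i) -/(\sum_(i < n) G i).
rewrite -(@sum_trunc G (size e) (maxn n (size e))) ?leq_maxr //; last first.
  by move=> i /andP[hi _]; rewrite /G nth_default // mul0r.
by rewrite (@sum_trunc G n) ?leq_maxl // => i /andP[/he hi _]; rewrite /G hi mul0r.
Qed.

(* For n >= 1 a monomial value either contains some betabar_j with j >= n, or,
   after subtracting n = n betabar_0, is an integral combination of
   betabar_0, ..., betabar_(n-1). *)
Lemma mono_val_split n e : (1 <= n)%N ->
  (exists j, (n <= j)%N /\ exists e', mono_val e = betabar j + mono_val e') \/
  exists l : nat -> int, mono_val e - n%:R = \sum_(j < n) (l j)%:~R * betabar j.
Proof.
move=> hn.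
case: (boolP [exists j : 'I_(size e), (n <= j)%N && (0 < nth 0 e j)%N]).
  move=> /existsP[j /andP[hj hpos]]; left; exists j; split => //.
  by eexists; apply: mono_val_drop.
move=> /existsPn hlow; right.
have he : forall j, (n <= j)%N -> nth 0 e j = 0%N.
  move=> j hj; case: (ltnP j (size e)) => [hs|hs]; last by rewrite nth_default.
  by apply/eqP; have := hlow (Ordinal hs); rewrite /= hj lt0n negbK.
exists (fun j => if j == 0%N then (nth 0 e 0)%:Z - n%:Z else (nth 0 e j)%:Z).
rewrite (mono_val_low he); case: n hn {hlow he} => [//|n] _.
by rewrite !big_ord_recl /= intrB !mulr1 addrAC.
Qed.

Section Valuation.
Variable K : closedFieldType.
Variable nu : Kxy_frac K -> rat.
Hypothesis hnu : is_nubar nu.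

Local Notation F := (Kxy_frac K).
Local Notation x' := (emb (Kxy_x K)).

Lemma nuM (a b : F) : a != 0 -> b != 0 -> nu (a * b) = nu a + nu b.
Proof. by case: hnu => h _; apply: h. Qed.
Lemma nuD (a b : F) :
  a + b != 0 -> a != 0 -> b != 0 -> Num.min (nu a) (nu b) <= nu (a + b).
Proof. by case: hnu => _ [h _]; apply: h. Qed.
Lemma nuC (c : K) : c != 0 -> nu (emb (c%:P%:P)) = 0.
Proof. by case: hnu => _ [_ [h _]]; apply: h. Qed.
Lemma nu_ge0 (f : Kxy K) : f != 0 -> 0 <= nu (emb f).
Proof. by case: hnu => _ [_ [_ [h _]]]; apply: h. Qed.
Lemma nu_gt0 (f : Kxy K) : f != 0 -> f.[0].[0] = 0 -> 0 < nu (emb f).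
Proof. by case: hnu => _ [_ [_ [_ [h _]]]]; apply: h. Qed.
Lemma nuP i : nu (emb (P K i)) = betabar i.
Proof. by case: hnu => _ [_ [_ [_ [_ [h _]]]]]; apply: h. Qed.
Lemma nu_gen (lam : rat) (f : Kxy K) : f != 0 -> lam <= nu (emb f) ->
  exists (s : Kxy K) (t : seq (Kxy K * seq nat)),
    [/\ s.[0].[0] != 0, all (fun p => lam <= mono_val p.2) t &
        s * f = \sum_(p <- t) p.1 * Pmono K p.2].
Proof. by case: hnu => _ [_ [_ [_ [_ [_ h]]]]]; apply: h. Qed.

Lemma nu1 : nu 1 = 0.
Proof. by have := nuC (oner_neq0 K); rewrite /emb !polyC1 tofrac1. Qed.

Lemma nuN (a : F) : a != 0 -> nu (- a) = nu a.
Proof.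
move=> a0; have nuN1 : nu (-1) = 0.
  have := @nuC (-1); rewrite oppr_eq0 oner_neq0 => /(_ isT).
  by rewrite /emb !polyCN !polyC1 tofracN tofrac1.
have m1 : (-1 : F) != 0 by rewrite oppr_eq0 oner_neq0.
by rewrite -mulN1r (nuM m1 a0) nuN1 add0r.
Qed.

Lemma nu_strict (a b : F) : a != 0 -> b != 0 -> nu a < nu b -> nu (a + b) = nu a.
Proof.
move=> a0 b0 lt_ab.
have ab0 : a + b != 0.
  by rewrite addr_eq0; apply: contraTneq lt_ab => ->; rewrite nuN // ltxx.
have := nuD ab0 a0 b0; rewrite ge_min => h1.
have := @nuD (a + b) (- b); rewrite addrK nuN ?oppr_eq0 // => /(_ a0 ab0 b0).
rewrite ge_min => h2; apply/eqP; rewrite eq_le; apply/andP; split.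
  by case/orP: h2 => // h; move: lt_ab; rewrite ltNge h.
by case/orP: h1 => // h; exact: le_trans (ltW lt_ab) h.
Qed.

Lemma nuX (a : F) k : a != 0 -> nu (a ^+ k) = k%:R * nu a.
Proof.
move=> a0; elim: k => [|k IH]; first by rewrite expr0 nu1 mul0r.
by rewrite exprS nuM ?expf_neq0 // IH -[k.+1]addn1 natrD mulrDl mul1r addrC.
Qed.

Lemma nuV (a : F) : a != 0 -> nu a^-1 = - nu a.
Proof.
move=> a0; apply/eqP; rewrite -addr_eq0 addrC -nuM ?invr_eq0 //.
by rewrite mulfV // nu1.
Qed.

Lemma nu_x : nu x' = 1.
Proof. exact: (nuP 0). Qed.

Lemma nu_prod m (G : 'I_m -> F) : (forall i, G i != 0) ->
  nu (\prod_(i < m) G i) = \sum_(i < m) nu (G i).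
Proof.
elim: m G => [|m IH] G hG; first by rewrite !big_ord0 nu1.
rewrite !big_ord_recr /= nuM ?IH //; apply/prodf_neq0 => i _; exact: hG.
Qed.

Lemma Pmono_neq0 e : Pmono K e != 0.
Proof. by apply/prodf_neq0 => i _; rewrite expf_neq0 ?P_neq0. Qed.

Lemma nu_Pmono e : nu (emb (Pmono K e)) = mono_val e.
Proof.
have embP i : emb (P K i) != 0 by rewrite emb_eq0 P_neq0.
have -> : emb (Pmono K e) = \prod_(i < size e) emb (P K i) ^+ nth 0 e i.
  by rewrite /Pmono /emb rmorph_prod; apply: eq_bigr => i _; rewrite rmorphXn.
rewrite nu_prod => [|i]; last by rewrite expf_neq0.
by apply: eq_bigr => i _; rewrite nuX // nuP.
Qed.

Lemma nu_unit (s : Kxy K) : s.[0].[0] != 0 -> nu (emb s) = 0.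
Proof.
set c := s.[0].[0] => hc; have -> : s = c%:P%:P + (s - c%:P%:P) by rewrite addrC subrK.
have c0 : emb (c%:P%:P) != 0 by rewrite emb_eq0 !polyC_eq0.
have [->|d0] := eqVneq (s - c%:P%:P) 0; first by rewrite addr0 nuC.
rewrite embD nu_strict ?emb_eq0 ?nuC ?polyC_eq0 // nu_gt0 //.
by rewrite !hornerE /c subrr.
Qed.

Lemma nu_sum_gt (T : eqType) (t : seq T) (G : T -> F) (c : rat) :
  (forall p, p \in t -> G p != 0 -> c < nu (G p)) ->
  \sum_(p <- t) G p != 0 -> c < nu (\sum_(p <- t) G p).
Proof.
elim: t => [|q t IH] hG; first by rewrite big_nil eqxx.
have hGt p : p \in t -> G p != 0 -> c < nu (G p) by move=> pt; apply: hG; rewrite inE pt orbT.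
rewrite big_cons; have [->|q0] := eqVneq (G q) 0; first by rewrite add0r; exact: IH hGt.
have [->|r0] := eqVneq (\sum_(p <- t) G p) 0.
  by rewrite addr0 => _; apply: hG; rewrite ?mem_head.
move=> s0; apply: lt_le_trans (nuD s0 q0 r0).
by rewrite lt_min hG ?mem_head // (IH hGt r0).
Qed.

(* Since (P_i) is a generating sequence, the value of every nonzero polynomial
   is the value of a monomial in the P_i: otherwise, writing  s f  (s a unit) as
   a combination of monomials of value >= nu(f), all terms would have value
   > nu(f), and so would  s f. *)
Lemma nu_monomial (f : Kxy K) : f != 0 -> exists e, nu (emb f) = mono_val e.
Proof.
move=> f0; have [s [t [hs hall hst]]] := nu_gen f0 (lexx (nu (emb f))).
set lam := nu (emb f) in hall *.
have [/hasP[p pt /andP[_ hle]]|hno] :=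
  boolP (has (fun p => (p.1 != 0) && (mono_val p.2 <= lam)) t).
  by exists p.2; apply/eqP; rewrite eq_le hle (allP hall p pt).
have s0 : s != 0 by apply: contraNneq hs => ->; rewrite !horner0.
have : lam < nu (emb (s * f)).
  rewrite hst emb_sum; apply: nu_sum_gt; last by rewrite -emb_sum -hst emb_eq0 mulf_neq0.
  move=> p pt; have [->|p0] := eqVneq p.1 0; first by rewrite mul0r emb0 eqxx.
  move=> _; rewrite embM nuM ?emb_eq0 ?Pmono_neq0 // nu_Pmono.
  have lt_p : lam < mono_val p.2.
    by rewrite ltNge; apply: contra (hasPn hno p pt) => hle; rewrite p0.
  by apply: lt_le_trans lt_p _; rewrite lerDr nu_ge0.
by rewrite embM nuM ?emb_eq0 // nu_unit // add0r ltxx.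
Qed.

Lemma M0_mono_val e : M nu 0 (mono_val e).
Proof.
exists (emb (Pmono K e)); split; last exact: nu_Pmono.
  by apply/W0E; exists (Pmono K e).
by rewrite emb_eq0 Pmono_neq0.
Qed.

Lemma M_monomial n lam : M nu n lam -> exists e, lam = mono_val e - n%:R.
Proof.
move=> [f [hW f0 <-]]; have [g hg] := W_clear hW.
have xn0 : x' ^+ n != 0 by rewrite expf_neq0 ?embx_neq0.
have g0 : g != 0 by rewrite -(emb_eq0 g) -hg; exact: mulf_neq0 xn0 f0.
have [e he] := nu_monomial g0; exists e.
by rewrite -he -hg nuM // nuX ?embx_neq0 // nu_x mulr1 addrC addKr.
Qed.

(* (betabar_j - n) + M_0 ⊆ M_n for j >= n: P_j h / x^n lies in W_n as P_j ∈ m^n. *)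
Lemma M_shift n j mu : (n <= j)%N -> M nu 0 mu -> M nu n (betabar j - n%:R + mu).
Proof.
move=> hj [f [/W0E[h ->] h0 <-]].
have xn0 : x' ^+ n != 0 := expf_neq0 n (embx_neq0 K).
have P0 : emb (P K j) != 0 by rewrite emb_eq0 P_neq0.
have Ph0 : emb (P K j * h) != 0 by rewrite embM; exact: mulf_neq0 P0 h0.
exists (emb (P K j * h) / x' ^+ n); split.
- apply: mpow_W; rewrite mulrC; apply: mpowM; exact: mpow_le hj (mpow_P K j).
- exact: mulf_neq0 Ph0 (invr_neq0 xn0).
- rewrite (nuM Ph0 (invr_neq0 xn0)) (nuV xn0) embM (nuM P0 h0) nuP.
  by rewrite (nuX _ (embx_neq0 K)) nu_x mulr1 addrAC.
Qed.

End Valuation.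

Theorem mainTheorem14 (K : closedFieldType) (nu : Kxy_frac K -> rat)
  (hnu : is_nubar nu) (n : nat) (hn : (1 <= n)%N) (lam : rat) :
  M nu n lam <->
  (U nu n lam \/
   exists j : nat, (n <= j)%N /\
     exists mu : rat, M nu 0 mu /\ lam = (betabar j - n%:R) + mu).
Proof.
split=> [hM|[[hM _] //|[j [hj [mu [hmu ->]]]]]]; last exact: M_shift.
have [e lamE] := M_monomial hnu hM; rewrite lamE in hM *.
have [[j [hj [e' ->]]]|[l hl]] := mono_val_split e hn.
  right; exists j; split => //; exists (mono_val e'); split.
    exact: M0_mono_val.
  by rewrite addrAC.
by left; split => //; exists l.
Qed.
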